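(* Let $0<\beta<\alpha$ and consider $\frac{dx}{dt}=-\alpha x+f(x,y)$, $\frac{dy}{dt}=\beta y+g(x,y)$, where $f,g$ are real analytic at $(0,0)$, vanish at $(0,0)$ together with their first partial derivatives, and are $C^4$ near a homoclinic solution $\ell(s)=(a(s),b(s))$ of $(0,0)$ which approaches $(0,0)$ along the positive $x$-axis direction as $s\to+\infty$ and along the positive $y$-axis direction as $s\to-\infty$. Let $h$ be continuous (indeed $C^4$) near $\ell$ and let $\omega\in\mathbb R$. Then the integrals $A=\int_{-\infty}^{\infty}(u(s)+v(s))h(a(s),b(s))e^{-\int_0^sE(\tau)d\tau}ds$, $C=\int_{-\infty}^{\infty}(u(s)+v(s))\cos(\omega s)e^{-\int_0^sE(\tau)d\tau}ds$, $S=\int_{-\infty}^{\infty}(u(s)+v(s))\sin(\omega s)e^{-\int_0^sE(\tau)d\tau}ds$ are absolutely convergent.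
   Context: $(u(s),v(s))=\|\ell'(s)\|^{-1}\ell'(s)$ is the unit tangent to $\ell$, and $E(s)=v^2(s)(-\alpha+\partial_xf(\ell(s)))+u^2(s)(\beta+\partial_yg(\ell(s)))-u(s)v(s)(\partial_yf(\ell(s))+\partial_xg(\ell(s)))$. *)

From Stdlib Require Import Reals.
From Coquelicot Require Import Coquelicot.
Open Scope R_scope.

Definition dx (f : R -> R -> R) (x y : R) : R := Derive (fun t => f t y) x.
Definition dy (f : R -> R -> R) (x y : R) : R := Derive (fun t => f x t) y.

Fixpoint Ck (k : nat) (f : R -> R -> R) (U : R * R -> Prop) : Prop :=
  match k with
  | O => forall p, U p -> continuous (fun q : R * R => f (fst q) (snd q)) p
  | S k' => (forall x y, U (x, y) ->
               ex_derive (fun t => f t y) x /\ ex_derive (fun t => f x t) y)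
            /\ Ck k' (dx f) U /\ Ck k' (dy f) U
  end.

Definition analytic_at0 (f : R -> R -> R) : Prop :=
  exists r : R, 0 < r /\ exists c : nat -> nat -> R,
    forall x y, Rabs x < r -> Rabs y < r ->
      (forall i, ex_series (fun j => Rabs (c i j * x ^ i * y ^ j))) /\
      ex_series (fun i => Series (fun j => Rabs (c i j * x ^ i * y ^ j))) /\
      is_series (fun i => Series (fun j => c i j * x ^ i * y ^ j)) (f x y).

Definition tan_u (a b : R -> R) (s : R) : R :=
  Derive a s / sqrt (Derive a s ^ 2 + Derive b s ^ 2).
Definition tan_v (a b : R -> R) (s : R) : R :=
  Derive b s / sqrt (Derive a s ^ 2 + Derive b s ^ 2).

Definition Efun (alpha beta : R) (f g : R -> R -> R) (a b : R -> R) (s : R) : R :=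
  let u := tan_u a b s in let v := tan_v a b s in
  v ^ 2 * (- alpha + dx f (a s) (b s))
  + u ^ 2 * (beta + dy g (a s) (b s))
  - u * v * (dy f (a s) (b s) + dx g (a s) (b s)).

Definition weight (alpha beta : R) (f g : R -> R -> R) (a b : R -> R) (s : R) : R :=
  (tan_u a b s + tan_v a b s) * exp (- RInt (Efun alpha beta f g a b) 0 s).

Definition abs_conv_integral (F : R -> R) : Prop :=
  ex_RInt_gen (fun s => Rabs (F s)) (Rbar_locally m_infty) (Rbar_locally p_infty).

(* Along the orbit, f and g are o(|(a, b)|) near the origin, so the unit tangent (u, v) tends to
   (-1, 0) as s -> +oo and to (0, 1) as s -> -oo; hence E(s) tends to beta at +oo and to -alpha
   at -oo, and e^{-int_0^s E} decays exponentially at both ends, while u + v, cos, sin and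
   h(a, b) stay bounded there.  The integrands are continuous because the vector field never
   vanishes on the orbit: by a Gronwall estimate a solution reaching a rest point stays there,
   which is incompatible with (a, b) -> (0, 0) and (a, b) <> (0, 0). *)

From Stdlib Require Import Reals Lra Classical.
From Coquelicot Require Import Coquelicot.
Open Scope R_scope.

Section RealLimits.
Context {F : (R -> Prop) -> Prop} {FF : Filter F}.

Lemma lim_plus (A B : R -> R) (p q : R) :
  filterlim A F (locally p) -> filterlim B F (locally q) ->
  filterlim (fun s => A s + B s) F (locally (p + q)).
Proof.
  intros HA HB. eapply filterlim_comp_2; [exact HA | exact HB |].
  apply (filterlim_plus (V := R_NormedModule)).
Qed.

Lemma lim_mult (A B : R -> R) (p q : R) :
  filterlim A F (locally p) -> filterlim B F (locally q) ->
  filterlim (fun s => A s * B s) F (locally (p * q)).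
Proof.
  intros HA HB. eapply filterlim_comp_2; [exact HA | exact HB |].
  now apply (filterlim_Rbar_mult p q (p * q)).
Qed.

Lemma lim_scal (c : R) (A : R -> R) (p : R) :
  filterlim A F (locally p) -> filterlim (fun s => c * A s) F (locally (c * p)).
Proof. apply lim_mult, filterlim_const. Qed.

Lemma lim_minus (A B : R -> R) (p q : R) :
  filterlim A F (locally p) -> filterlim B F (locally q) ->
  filterlim (fun s => A s - B s) F (locally (p - q)).
Proof.
  intros HA HB. replace (p - q) with (p + -1 * q) by ring.
  eapply filterlim_ext; [| apply lim_plus, lim_scal; [exact HA | exact HB]].
  intro s; simpl; ring.
Qed.

Lemma lim_continuous (k : R -> R) (A : R -> R) (p : R) :
  continuous k p -> filterlim A F (locally p) ->
  filterlim (fun s => k (A s)) F (locally (k p)).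
Proof. intros Hk HA. eapply filterlim_comp; [exact HA | exact Hk]. Qed.

Lemma lim_div (A B : R -> R) (p q : R) : q <> 0 ->
  filterlim A F (locally p) -> filterlim B F (locally q) ->
  filterlim (fun s => A s / B s) F (locally (p / q)).
Proof.
  intros Hq HA HB. apply (lim_mult A (fun s => / B s)); [exact HA |].
  apply lim_continuous; [apply continuous_Rinv, Hq | exact HB].
Qed.

Lemma lim_sqrt (A : R -> R) (p : R) :
  filterlim A F (locally p) -> filterlim (fun s => sqrt (A s)) F (locally (sqrt p)).
Proof. apply lim_continuous, continuous_sqrt. Qed.

Lemma lim_pow2 (A : R -> R) (p : R) :
  filterlim A F (locally p) -> filterlim (fun s => A s ^ 2) F (locally (p ^ 2)).
Proof.
  intros HA. replace (p ^ 2) with (p * p) by ring.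
  eapply filterlim_ext; [| exact (lim_mult _ _ _ _ HA HA)]. intro s; simpl; ring.
Qed.

Lemma lim_Rabs_0 (A : R -> R) :
  filterlim (fun s => Rabs (A s)) F (locally 0) -> filterlim A F (locally 0).
Proof.
  intros HA. apply filterlim_locally. intros eps.
  apply filterlim_locally with (eps := eps) in HA.
  eapply filter_imp; [| exact HA]. intros s Hs.
  change (Rabs (Rabs (A s) - 0) < eps) in Hs. change (Rabs (A s - 0) < eps).
  now rewrite Rminus_0_r, Rabs_Rabsolu in *.
Qed.

Lemma lim_continuous_2 (G : R -> R -> R) (A B : R -> R) (p q : R) :
  continuous (fun z : R * R => G (fst z) (snd z)) (p, q) ->
  filterlim A F (locally p) -> filterlim B F (locally q) ->
  filterlim (fun s => G (A s) (B s)) F (locally (G p q)).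
Proof.
  intros HG HA HB.
  apply (filterlim_comp _ _ _ (fun s => (A s, B s)) (fun z : R * R => G (fst z) (snd z))
           F (locally (p, q))); [| exact HG].
  intros P [eps HP].
  apply filterlim_locally with (eps := eps) in HA.
  apply filterlim_locally with (eps := eps) in HB.
  unfold filtermap. eapply filter_imp; [| exact (filter_and _ _ HA HB)].
  intros s [Hs1 Hs2]. now apply HP.
Qed.

End RealLimits.

Lemma Rabs_sub_le_of_derive_bound (h : R -> R) (p q M : R) :
  (forall x, Rmin p q <= x <= Rmax p q -> ex_derive h x /\ Rabs (Derive h x) <= M) ->
  Rabs (h q - h p) <= M * Rabs (q - p).
Proof.
  intros H.
  destruct (MVT_gen h p q (Derive h)) as [c [Hc ->]].
  - intros x Hx. apply Derive_correct, H; lra.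
  - intros x Hx. apply continuity_pt_filterlim.
    apply (ex_derive_continuous (K := R_AbsRing) (V := R_NormedModule)), H; lra.
  - rewrite Rabs_mult. apply Rmult_le_compat_r; [apply Rabs_pos | apply H; lra].
Qed.

Lemma box_lipschitz_of_partials_bound (g : R -> R -> R) (x0 y0 d M : R) :
  (forall x y, Rabs (x - x0) <= d -> Rabs (y - y0) <= d ->
     ex_derive (fun t => g t y) x /\ ex_derive (fun t => g x t) y /\
     Rabs (dx g x y) <= M /\ Rabs (dy g x y) <= M) ->
  forall x y x' y', Rabs (x - x0) <= d -> Rabs (y - y0) <= d ->
    Rabs (x' - x0) <= d -> Rabs (y' - y0) <= d ->
    Rabs (g x y - g x' y') <= M * (Rabs (x - x') + Rabs (y - y')).
Proof.
  intros H x y x' y' Hx Hy Hx' Hy'.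
  assert (between : forall p q t z, Rmin p q <= t <= Rmax p q ->
            Rabs (p - z) <= d -> Rabs (q - z) <= d -> Rabs (t - z) <= d).
  { intros p q t z Ht Hp Hq. apply Rabs_le_between in Hp, Hq. apply Rabs_le_between.
    unfold Rmin, Rmax in Ht. destruct (Rle_dec p q); lra. }
  replace (g x y - g x' y') with ((g x y - g x' y) + (g x' y - g x' y')) by ring.
  eapply Rle_trans; [apply Rabs_triang |]. rewrite Rmult_plus_distr_l.
  apply Rplus_le_compat.
  - apply (Rabs_sub_le_of_derive_bound (fun t => g t y)). intros t Ht.
    destruct (H t y) as [? [_ [? _]]]; eauto.
  - apply (Rabs_sub_le_of_derive_bound (fun t => g x' t)). intros t Ht.
    destruct (H x' t) as [_ [? [_ ?]]]; eauto.
Qed.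

Lemma lipschitz_near_of_continuous_partials (g : R -> R -> R) (U : R * R -> Prop)
  (x0 y0 eps : R) :
  open U -> U (x0, y0) -> 0 < eps ->
  (forall x y, U (x, y) -> ex_derive (fun t => g t y) x /\ ex_derive (fun t => g x t) y) ->
  continuous (fun q : R * R => dx g (fst q) (snd q)) (x0, y0) ->
  continuous (fun q : R * R => dy g (fst q) (snd q)) (x0, y0) ->
  exists d, 0 < d /\
    forall x y x' y', Rabs (x - x0) <= d -> Rabs (y - y0) <= d ->
    Rabs (x' - x0) <= d -> Rabs (y' - y0) <= d ->
    Rabs (g x y - g x' y') <= (Rabs (dx g x0 y0) + Rabs (dy g x0 y0) + eps)
                               * (Rabs (x - x') + Rabs (y - y')).
Proof.
  intros HU HU0 Heps Hder Hcx Hcy.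
  destruct (HU _ HU0) as [e0 He0].
  apply filterlim_locally with (eps := mkposreal eps Heps) in Hcx as [e1 He1].
  apply filterlim_locally with (eps := mkposreal eps Heps) in Hcy as [e2 He2].
  pose proof (cond_pos e0). pose proof (cond_pos e1). pose proof (cond_pos e2).
  set (d := Rmin e0 (Rmin e1 e2) / 2).
  assert (Hd : 0 < d /\ d < e0 /\ d < e1 /\ d < e2).
  { unfold d. pose proof (Rmin_l e0 (Rmin e1 e2)). pose proof (Rmin_r e0 (Rmin e1 e2)).
    pose proof (Rmin_l e1 e2). pose proof (Rmin_r e1 e2).
    assert (0 < Rmin e0 (Rmin e1 e2)) by (repeat apply Rmin_pos; assumption). lra. }
  destruct Hd as [Hd [Hd0 [Hd1 Hd2]]].
  exists d. split; [lra |].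
  apply box_lipschitz_of_partials_bound. intros x y Hx Hy.
  assert (Hball : forall e, d < e -> ball (x0, y0) e (x, y))
    by (intros e He; split; [change (Rabs (x - x0) < e) | change (Rabs (y - y0) < e)]; lra).
  destruct (Hder x y (He0 _ (Hball e0 ltac:(lra)))) as [Dx Dy].
  assert (Bx : Rabs (dx g x y - dx g x0 y0) < eps) by exact (He1 _ (Hball e1 ltac:(lra))).
  assert (By : Rabs (dy g x y - dy g x0 y0) < eps) by exact (He2 _ (Hball e2 ltac:(lra))).
  pose proof (Rabs_triang_inv (dx g x y) (dx g x0 y0)).
  pose proof (Rabs_triang_inv (dy g x y) (dy g x0 y0)).
  pose proof (Rabs_pos (dx g x0 y0)). pose proof (Rabs_pos (dy g x0 y0)).
  repeat split; auto; lra.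
Qed.

Lemma Ck_continuous (U : R * R -> Prop) (k : nat) (g : R -> R -> R) (x0 y0 : R) :
  open U -> Ck k g U -> U (x0, y0) ->
  continuous (fun q : R * R => g (fst q) (snd q)) (x0, y0).
Proof.
  intros HU. revert g. induction k as [| k IH]; intros g Hg H0; [now apply Hg |].
  destruct Hg as [Hder [Hx Hy]].
  destruct (lipschitz_near_of_continuous_partials g U x0 y0 1 HU H0 Rlt_0_1 Hder
              (IH _ Hx H0) (IH _ Hy H0)) as [d [Hd HL]].
  set (M := Rabs (dx g x0 y0) + Rabs (dy g x0 y0) + 1) in HL.
  assert (HM : 0 < M)
    by (unfold M; pose proof (Rabs_pos (dx g x0 y0)); pose proof (Rabs_pos (dy g x0 y0)); lra).
  apply filterlim_locally. intros eps. pose proof (cond_pos eps).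
  assert (Hdel : 0 < Rmin d (eps / (2 * M)))
    by (apply Rmin_pos; [lra | apply Rdiv_lt_0_compat; lra]).
  exists (mkposreal _ Hdel). intros [x y] [Hbx Hby].
  change (Rabs (x - x0) < Rmin d (eps / (2 * M))) in Hbx.
  change (Rabs (y - y0) < Rmin d (eps / (2 * M))) in Hby.
  change (Rabs (g x y - g x0 y0) < eps).
  pose proof (Rmin_l d (eps / (2 * M))). pose proof (Rmin_r d (eps / (2 * M))).
  assert (H00 : Rabs (x0 - x0) <= d) by (rewrite Rminus_diag, Rabs_R0; lra).
  assert (H00' : Rabs (y0 - y0) <= d) by (rewrite Rminus_diag, Rabs_R0; lra).
  eapply Rle_lt_trans; [exact (HL x y x0 y0 ltac:(lra) ltac:(lra) H00 H00') |].
  assert (Hsum : Rabs (x - x0) + Rabs (y - y0) < eps / M).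
  { replace (eps / M) with (2 * (eps / (2 * M))) by (field; lra). lra. }
  apply Rmult_lt_compat_l with (r := M) in Hsum; [| lra].
  replace (M * (eps / M)) with (pos eps) in Hsum by (field; lra). exact Hsum.
Qed.

Lemma dot_le_of_linear_bound (p q A B L : R) : 0 <= L ->
  Rabs A <= L * (Rabs p + Rabs q) -> Rabs B <= L * (Rabs p + Rabs q) ->
  2 * p * A + 2 * q * B <= 4 * L * (p ^ 2 + q ^ 2).
Proof.
  intros HL HA HB.
  assert (HpA : p * A <= Rabs p * (L * (Rabs p + Rabs q))).
  { eapply Rle_trans; [apply Rle_abs |]. rewrite Rabs_mult.
    apply Rmult_le_compat_l; auto using Rabs_pos. }
  assert (HqB : q * B <= Rabs q * (L * (Rabs p + Rabs q))).
  { eapply Rle_trans; [apply Rle_abs |]. rewrite Rabs_mult.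
    apply Rmult_le_compat_l; auto using Rabs_pos. }
  rewrite <- (pow2_abs p), <- (pow2_abs q).
  assert (0 <= L * (Rabs p - Rabs q) ^ 2) by (apply Rmult_le_pos; [lra | apply pow2_ge_0]).
  nra.
Qed.

Section RestPoint.
Variables (P Q : R -> R -> R) (a b : R -> R) (x0 y0 d L : R).
Hypothesis Ha : forall s, is_derive a s (P (a s) (b s)).
Hypothesis Hb : forall s, is_derive b s (Q (a s) (b s)).
Hypothesis Hd : 0 < d.
Hypothesis HL : 0 <= L.
Hypothesis field_linear_bound :
  forall x y, Rabs (x - x0) <= d -> Rabs (y - y0) <= d ->
    Rabs (P x y) <= L * (Rabs (x - x0) + Rabs (y - y0)) /\
    Rabs (Q x y) <= L * (Rabs (x - x0) + Rabs (y - y0)).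

Let dist2 s := (a s - x0) ^ 2 + (b s - y0) ^ 2.

Lemma dist2_ge_0 s : 0 <= dist2 s.
Proof. unfold dist2. pose proof (pow2_ge_0 (a s - x0)). pose proof (pow2_ge_0 (b s - y0)). lra. Qed.

Lemma dist2_continuous s : continuous dist2 s.
Proof.
  apply (ex_derive_continuous (K := R_AbsRing) (V := R_NormedModule)). unfold dist2.
  auto_derive. repeat split; eexists; [apply Ha | apply Hb].
Qed.

Lemma dist2_stays_small s1 : dist2 s1 = 0 -> exists del, 0 < del /\
  forall s, s1 <= s <= s1 + del -> Rabs (a s - x0) <= d /\ Rabs (b s - y0) <= d.
Proof.
  intros H1. pose proof (dist2_continuous s1) as C.
  apply filterlim_locally with (eps := mkposreal _ (Rmult_lt_0_compat _ _ Hd Hd)) in C as [del Hdel].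
  exists (del / 2). split; [pose proof (cond_pos del); lra |]. intros s Hs.
  assert (Hball : Rabs (s - s1) < del) by (rewrite Rabs_right; pose proof (cond_pos del); lra).
  specialize (Hdel s Hball). change (Rabs (dist2 s - dist2 s1) < d * d) in Hdel.
  rewrite H1, Rminus_0_r, Rabs_right in Hdel by apply Rle_ge, dist2_ge_0.
  unfold dist2 in Hdel. rewrite <- (pow2_abs (a s - x0)), <- (pow2_abs (b s - y0)) in Hdel.
  pose proof (Rabs_pos (a s - x0)). pose proof (Rabs_pos (b s - y0)).
  pose proof (pow2_ge_0 (Rabs (a s - x0))). pose proof (pow2_ge_0 (Rabs (b s - y0))).
  split; nra.
Qed.

Lemma dist2_gronwall s1 s : s1 <= s ->
  (forall r, s1 <= r <= s -> Rabs (a r - x0) <= d /\ Rabs (b r - y0) <= d) ->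
  dist2 s * exp (- (4 * L) * (s - s1)) <= dist2 s1.
Proof.
  intros Hs Hbox.
  set (psi r := dist2 r * exp (- (4 * L) * (r - s1))).
  set (dpsi r := (2 * (a r - x0) * P (a r) (b r) + 2 * (b r - y0) * Q (a r) (b r)
                  - 4 * L * dist2 r) * exp (- (4 * L) * (r - s1))).
  assert (Dpsi : forall r, is_derive psi r (dpsi r)).
  { intro r. unfold psi, dpsi, dist2. auto_derive.
    - repeat split; eexists; [apply Ha | apply Hb].
    - change (Derive (fun x => a x) r) with (Derive a r).
      change (Derive (fun x => b x) r) with (Derive b r).
      rewrite (is_derive_unique _ _ _ (Ha r)), (is_derive_unique _ _ _ (Hb r)).
      unfold Rminus. ring. }
  destruct (MVT_gen psi s1 s dpsi) as [c [Hc Heq]].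
  { intros x _. apply Dpsi. }
  { intros x _. apply continuity_pt_filterlim.
    apply (ex_derive_continuous (K := R_AbsRing) (V := R_NormedModule)). eexists; apply Dpsi. }
  rewrite Rmin_left, Rmax_right in Hc by lra.
  destruct (Hbox c ltac:(lra)) as [Nx Ny].
  destruct (field_linear_bound _ _ Nx Ny) as [Bx By].
  assert (dpsi c <= 0).
  { unfold dpsi. pose proof (dot_le_of_linear_bound _ _ _ _ L HL Bx By).
    pose proof (exp_pos (- (4 * L) * (c - s1))). apply Rmult_le_0_r; unfold dist2; lra. }
  assert (psi s1 = dist2 s1) by (unfold psi; rewrite Rminus_diag, Rmult_0_r, exp_0; ring).
  assert (dpsi c * (s - s1) <= 0) by (apply Rmult_le_0_r; lra).
  fold (psi s). lra.
Qed.

Lemma rest_point_forward_locally s1 : dist2 s1 = 0 ->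
  exists del, 0 < del /\ forall s, s1 <= s <= s1 + del -> dist2 s = 0.
Proof.
  intros H1. destruct (dist2_stays_small s1 H1) as [del [Hdel Hbox]].
  exists del. split; [exact Hdel |]. intros s Hs.
  pose proof (dist2_gronwall s1 s ltac:(lra) ltac:(intros r Hr; apply Hbox; lra)).
  pose proof (exp_pos (- (4 * L) * (s - s1))). pose proof (dist2_ge_0 s). nra.
Qed.

Lemma rest_point_forward s0 : dist2 s0 = 0 -> forall t, s0 <= t -> dist2 t = 0.
Proof.
  intros H0 t Ht.
  set (Good s := s0 <= s <= t /\ forall r, s0 <= r <= s -> dist2 r = 0).
  assert (Good0 : Good s0).
  { split; [lra |]. intros r Hr. now replace r with s0 by lra. }
  destruct (completeness Good) as [m [Hub Hlub]].
  { exists t. intros x [Hx _]. lra. }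
  { now exists s0. }
  assert (Hs0m : s0 <= m) by now apply Hub.
  assert (Hmt : m <= t) by (apply Hlub; intros x [Hx _]; lra).
  assert (Before : forall r, s0 <= r < m -> dist2 r = 0).
  { intros r Hr. destruct (classic (dist2 r = 0)) as [| Hne]; [assumption |].
    exfalso. enough (m <= r) by lra.
    apply Hlub. intros x [_ Hx]. destruct (Rle_dec x r) as [| Hxr]; [assumption |].
    exfalso. apply Hne, Hx. lra. }
  assert (Hm : dist2 m = 0).
  { destruct (Req_dec m s0) as [-> | Hne]; [assumption |].
    destruct (classic (dist2 m = 0)) as [| Hnz]; [assumption |]. exfalso.
    assert (Hpos : 0 < Rabs (dist2 m)) by now apply Rabs_pos_lt.
    pose proof (dist2_continuous m) as C.
    apply filterlim_locally with (eps := mkposreal _ Hpos) in C as [e He].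
    pose proof (cond_pos e).
    set (r := Rmax s0 (m - e / 2)).
    assert (Hr : s0 <= r < m /\ m - e / 2 <= r).
    { unfold r. split; [split; [apply Rmax_l | apply Rmax_lub_lt; lra] | apply Rmax_r]. }
    assert (Hball : Rabs (r - m) < e) by (rewrite Rabs_left; lra).
    specialize (He r Hball). change (Rabs (dist2 r - dist2 m) < Rabs (dist2 m)) in He.
    rewrite (Before r ltac:(lra)), Rminus_0_l, Rabs_Ropp in He. lra. }
  destruct (Req_dec m t) as [<- | Hne]; [assumption |]. exfalso.
  destruct (rest_point_forward_locally m Hm) as [del [Hdel Hstay]].
  assert (Good (Rmin (m + del) t)).
  { split; [split; [apply Rmin_glb; lra | apply Rmin_r] |].
    intros r Hr. destruct (Rlt_le_dec r m); [apply Before; lra |].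
    pose proof (Rmin_l (m + del) t). apply Hstay; lra. }
  assert (Rmin (m + del) t <= m) by now apply Hub.
  assert (m < Rmin (m + del) t) by (apply Rmin_glb_lt; lra). lra.
Qed.

End RestPoint.

Lemma Ck_lipschitz_near (U : R * R -> Prop) (k : nat) (g : R -> R -> R) (x0 y0 eps : R) :
  open U -> Ck (S k) g U -> U (x0, y0) -> 0 < eps ->
  exists d, 0 < d /\
    forall x y x' y', Rabs (x - x0) <= d -> Rabs (y - y0) <= d ->
    Rabs (x' - x0) <= d -> Rabs (y' - y0) <= d ->
    Rabs (g x y - g x' y') <= (Rabs (dx g x0 y0) + Rabs (dy g x0 y0) + eps)
                               * (Rabs (x - x') + Rabs (y - y')).
Proof.
  intros HU [Hder [Hx Hy]] H0 Heps.
  apply (lipschitz_near_of_continuous_partials g U); auto; now apply (Ck_continuous U k).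
Qed.

Lemma Rabs_div_norm_le_1 (D1 D2 : R) : 0 < D1 ^ 2 + D2 ^ 2 ->
  Rabs (D1 / sqrt (D1 ^ 2 + D2 ^ 2)) <= 1.
Proof.
  intro h. pose proof (sqrt_lt_R0 _ h).
  unfold Rdiv. rewrite Rabs_mult, Rabs_inv, (Rabs_right (sqrt _)) by lra.
  apply Rmult_le_reg_r with (sqrt (D1 ^ 2 + D2 ^ 2)); [lra |].
  rewrite Rmult_assoc, Rinv_l, Rmult_1_r, Rmult_1_l by lra.
  rewrite <- (sqrt_pow2 (Rabs D1)) by apply Rabs_pos.
  apply sqrt_le_1_alt. rewrite pow2_abs. pose proof (pow2_ge_0 D2). lra.
Qed.

Section PlanarSystem.
Variables (alpha beta : R) (f g : R -> R -> R) (a b : R -> R) (U : R * R -> Prop) (k : nat).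
Hypothesis HU : open U.
Hypothesis Hf : Ck (S k) f U.
Hypothesis Hg : Ck (S k) g U.
Hypothesis Ha : forall s, is_derive a s (- alpha * a s + f (a s) (b s)).
Hypothesis Hb : forall s, is_derive b s (beta * b s + g (a s) (b s)).

Lemma system_linear_bound_at_rest_point (x0 y0 : R) : U (x0, y0) ->
  - alpha * x0 + f x0 y0 = 0 -> beta * y0 + g x0 y0 = 0 ->
  exists d L, 0 < d /\ 0 <= L /\
    forall x y, Rabs (x - x0) <= d -> Rabs (y - y0) <= d ->
      Rabs (- alpha * x + f x y) <= L * (Rabs (x - x0) + Rabs (y - y0)) /\
      Rabs (beta * y + g x y) <= L * (Rabs (x - x0) + Rabs (y - y0)).
Proof.
  intros H0 E1 E2.
  destruct (Ck_lipschitz_near U k f x0 y0 1 HU Hf H0 Rlt_0_1) as [df [Hdf Lf]].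
  destruct (Ck_lipschitz_near U k g x0 y0 1 HU Hg H0 Rlt_0_1) as [dg [Hdg Lg]].
  set (Mf := Rabs (dx f x0 y0) + Rabs (dy f x0 y0) + 1) in Lf.
  set (Mg := Rabs (dx g x0 y0) + Rabs (dy g x0 y0) + 1) in Lg.
  assert (0 <= Mf) by (unfold Mf; pose proof (Rabs_pos (dx f x0 y0)); pose proof (Rabs_pos (dy f x0 y0)); lra).
  assert (0 <= Mg) by (unfold Mg; pose proof (Rabs_pos (dx g x0 y0)); pose proof (Rabs_pos (dy g x0 y0)); lra).
  pose proof (Rabs_pos alpha). pose proof (Rabs_pos beta).
  exists (Rmin df dg), (Rabs alpha + Rabs beta + Mf + Mg).
  split; [now apply Rmin_pos |]. split; [lra |].
  intros x y Hx Hy. pose proof (Rmin_l df dg). pose proof (Rmin_r df dg).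
  assert (H00 : Rabs (x0 - x0) = 0 /\ Rabs (y0 - y0) = 0) by (rewrite !Rminus_diag, Rabs_R0; lra).
  pose proof (Lf x y x0 y0 ltac:(lra) ltac:(lra) ltac:(lra) ltac:(lra)) as F1.
  pose proof (Lg x y x0 y0 ltac:(lra) ltac:(lra) ltac:(lra) ltac:(lra)) as G1.
  pose proof (Rabs_pos (x - x0)). pose proof (Rabs_pos (y - y0)).
  split.
  - replace (- alpha * x + f x y) with (- alpha * (x - x0) + (f x y - f x0 y0)) by lra.
    eapply Rle_trans; [apply Rabs_triang |]. rewrite Rabs_mult, Rabs_Ropp. nra.
  - replace (beta * y + g x y) with (beta * (y - y0) + (g x y - g x0 y0)) by lra.
    eapply Rle_trans; [apply Rabs_triang |]. rewrite Rabs_mult. nra.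
Qed.

Lemma orbit_field_nonvanishing :
  (forall s, U (a s, b s)) -> (forall s, (a s, b s) <> (0, 0)) ->
  is_lim a p_infty 0 -> is_lim b p_infty 0 ->
  forall s, 0 < (- alpha * a s + f (a s) (b s)) ^ 2 + (beta * b s + g (a s) (b s)) ^ 2.
Proof.
  intros HUab Hnz La Lb s.
  set (P := - alpha * a s + f (a s) (b s)). set (Q := beta * b s + g (a s) (b s)).
  pose proof (pow2_ge_0 P). pose proof (pow2_ge_0 Q).
  destruct (Rle_lt_dec (P ^ 2 + Q ^ 2) 0) as [Hle |]; [exfalso | assumption].
  assert (Hstay : forall t, s <= t -> a t = a s /\ b t = b s).
  { intros t Ht.
    assert (Hrest : (a s - a s) ^ 2 + (b s - b s) ^ 2 = 0) by ring.
    destruct (system_linear_bound_at_rest_point _ _ (HUab s) ltac:(fold P; nra) ltac:(fold Q; nra))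
      as [d [L [Hd [HL Hbound]]]].
    pose proof (rest_point_forward (fun x y => - alpha * x + f x y) (fun x y => beta * y + g x y)
                  a b (a s) (b s) d L Ha Hb Hd HL Hbound s Hrest t Ht) as Ht0.
    pose proof (pow2_ge_0 (a t - a s)). pose proof (pow2_ge_0 (b t - b s)). split; nra. }
  assert (Hconst : forall c (w : R -> R), (forall t, s <= t -> w t = c) -> is_lim w p_infty 0 -> c = 0).
  { intros c w Hw Lw.
    assert (Lc : is_lim w p_infty c).
    { apply is_lim_ext_loc with (fun _ => c); [exists s; intros t Ht; symmetry; apply Hw; lra |].
      apply is_lim_const. }
    apply is_lim_unique in Lw, Lc. rewrite Lw in Lc. now injection Lc. }
  apply (Hnz s). f_equal.
  - apply (Hconst _ a); [intros t Ht; apply Hstay, Ht | exact La].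
  - apply (Hconst _ b); [intros t Ht; apply Hstay, Ht | exact Lb].
Qed.

End PlanarSystem.

Section OrbitWeight.
Variables (alpha beta : R) (f g : R -> R -> R) (a b : R -> R) (U : R * R -> Prop) (k : nat).
Hypothesis HU : open U.
Hypothesis Hf : Ck (S k) f U.
Hypothesis Hg : Ck (S k) g U.
Hypothesis Ha : forall s, is_derive a s (- alpha * a s + f (a s) (b s)).
Hypothesis Hb : forall s, is_derive b s (beta * b s + g (a s) (b s)).
Hypothesis HUab : forall s, U (a s, b s).
Hypothesis Hpos :
  forall s, 0 < (- alpha * a s + f (a s) (b s)) ^ 2 + (beta * b s + g (a s) (b s)) ^ 2.

Let P s := - alpha * a s + f (a s) (b s).
Let Q s := beta * b s + g (a s) (b s).

Lemma orbit_comp_continuous (h : R -> R -> R) (n : nat) s :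
  Ck n h U -> continuous (fun t => h (a t) (b t)) s.
Proof.
  intros Hh. apply lim_continuous_2; [now apply (Ck_continuous U n) | |];
    apply (ex_derive_continuous (K := R_AbsRing) (V := R_NormedModule)); eexists; [apply Ha | apply Hb].
Qed.

Lemma tan_u_field s : tan_u a b s = P s / sqrt (P s ^ 2 + Q s ^ 2).
Proof. unfold tan_u. now rewrite (is_derive_unique _ _ _ (Ha s)), (is_derive_unique _ _ _ (Hb s)). Qed.

Lemma tan_v_field s : tan_v a b s = Q s / sqrt (P s ^ 2 + Q s ^ 2).
Proof. unfold tan_v. now rewrite (is_derive_unique _ _ _ (Ha s)), (is_derive_unique _ _ _ (Hb s)). Qed.

Lemma tangent_continuous s : continuous (tan_u a b) s /\ continuous (tan_v a b) s.
Proof.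
  assert (CP : continuous P s).
  { apply lim_plus; [apply lim_scal | apply (orbit_comp_continuous f (S k) s Hf)].
    apply (ex_derive_continuous (K := R_AbsRing) (V := R_NormedModule)); eexists; apply Ha. }
  assert (CQ : continuous Q s).
  { apply lim_plus; [apply lim_scal | apply (orbit_comp_continuous g (S k) s Hg)].
    apply (ex_derive_continuous (K := R_AbsRing) (V := R_NormedModule)); eexists; apply Hb. }
  assert (Cnorm : continuous (fun t => sqrt (P t ^ 2 + Q t ^ 2)) s)
    by (apply lim_sqrt, lim_plus; apply lim_pow2; assumption).
  assert (Hnorm : sqrt (P s ^ 2 + Q s ^ 2) <> 0) by (apply Rgt_not_eq, sqrt_lt_R0, Hpos).
  split; unfold continuous.
  - rewrite tan_u_field. eapply filterlim_ext; [intro t; symmetry; apply tan_u_field |].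
    now apply lim_div.
  - rewrite tan_v_field. eapply filterlim_ext; [intro t; symmetry; apply tan_v_field |].
    now apply lim_div.
Qed.

Lemma Efun_continuous s : continuous (Efun alpha beta f g a b) s.
Proof.
  destruct Hf as [_ [Hfx Hfy]], Hg as [_ [Hgx Hgy]].
  destruct (tangent_continuous s) as [Cu Cv].
  unfold continuous, Efun; cbv zeta.
  apply lim_minus; [apply lim_plus |]; apply lim_mult;
    try (apply lim_pow2; assumption); try (apply lim_mult; assumption);
    repeat apply lim_plus; try apply filterlim_const;
    apply (orbit_comp_continuous _ k); assumption.
Qed.

Lemma weight_continuous s : continuous (weight alpha beta f g a b) s.
Proof.
  destruct (tangent_continuous s) as [Cu Cv].
  assert (CI : continuous (fun t => RInt (Efun alpha beta f g a b) 0 t) s).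
  { apply (ex_derive_continuous (K := R_AbsRing) (V := R_NormedModule)). eexists.
    apply (is_derive_RInt (V := R_NormedModule) (Efun alpha beta f g a b)
             (RInt (Efun alpha beta f g a b) 0) 0); [| apply Efun_continuous].
    apply filter_forall. intro t. apply (RInt_correct (V := R_CompleteNormedModule)).
    apply (ex_RInt_continuous (V := R_CompleteNormedModule)). intros; apply Efun_continuous. }
  unfold continuous, weight. apply lim_mult; [now apply lim_plus |].
  apply lim_continuous; [apply continuous_exp |].
  replace (- RInt (Efun alpha beta f g a b) 0 s) with (-1 * RInt (Efun alpha beta f g a b) 0 s) by ring.
  eapply filterlim_ext; [| apply lim_scal, CI]. intro t; simpl; ring.
Qed.

Lemma Rabs_weight_le s :
  Rabs (weight alpha beta f g a b s) <= 2 * exp (- RInt (Efun alpha beta f g a b) 0 s).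
Proof.
  unfold weight. rewrite Rabs_mult, (Rabs_right (exp _)) by (apply Rle_ge, Rlt_le, exp_pos).
  apply Rmult_le_compat_r; [apply Rlt_le, exp_pos |].
  eapply Rle_trans; [apply Rabs_triang |]. rewrite tan_u_field, tan_v_field.
  pose proof (Rabs_div_norm_le_1 (P s) (Q s) (Hpos s)).
  pose proof (Rabs_div_norm_le_1 (Q s) (P s) ltac:(rewrite Rplus_comm; apply Hpos)).
  rewrite (Rplus_comm (Q s ^ 2)) in *. lra.
Qed.

End OrbitWeight.

Lemma div_norm_scale (D1 D2 c : R) : 0 < c -> 0 < D1 ^ 2 + D2 ^ 2 ->
  D1 / sqrt (D1 ^ 2 + D2 ^ 2) = (D1 / c) / sqrt ((D1 / c) ^ 2 + (D2 / c) ^ 2).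
Proof.
  intros Hc HD.
  replace ((D1 / c) ^ 2 + (D2 / c) ^ 2) with ((D1 ^ 2 + D2 ^ 2) / c ^ 2) by (field; lra).
  rewrite sqrt_div_alt, sqrt_pow2 by (try apply pow_lt; lra).
  pose proof (sqrt_lt_R0 _ HD). field. lra.
Qed.

Section NearOrigin.
Context {F : (R -> Prop) -> Prop} {FF : Filter F}.
Variables (a b : R -> R).
Hypothesis Hnz : forall s, 0 < a s ^ 2 + b s ^ 2.

Lemma direction_lim_complement :
  filterlim (fun s => a s / sqrt (a s ^ 2 + b s ^ 2)) F (locally 1) ->
  filterlim (fun s => b s / sqrt (a s ^ 2 + b s ^ 2)) F (locally 0).
Proof.
  intros Hl. apply lim_Rabs_0.
  apply filterlim_ext with (fun s => sqrt (1 - (a s / sqrt (a s ^ 2 + b s ^ 2)) ^ 2)).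
  - intro s. rewrite <- sqrt_Rsqr_abs, Rsqr_pow2. f_equal.
    pose proof (Hnz s). set (r := sqrt (a s ^ 2 + b s ^ 2)).
    assert (0 < r) by apply sqrt_lt_R0, Hnz.
    assert (Hr : r ^ 2 = a s ^ 2 + b s ^ 2) by (apply pow2_sqrt; lra).
    replace ((a s / r) ^ 2) with (a s ^ 2 / r ^ 2) by (field; lra).
    replace ((b s / r) ^ 2) with (b s ^ 2 / r ^ 2) by (field; lra).
    rewrite Hr. field. lra.
  - replace 0 with (sqrt (1 - 1 ^ 2)) by (rewrite <- sqrt_0; f_equal; ring).
    apply lim_sqrt, lim_minus; [apply filterlim_const | now apply lim_pow2].
Qed.

Hypothesis La : filterlim a F (locally 0).
Hypothesis Lb : filterlim b F (locally 0).

Lemma Ck_flat_little_o (U : R * R -> Prop) (k : nat) (h : R -> R -> R) :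
  open U -> U (0, 0) -> Ck (S k) h U -> h 0 0 = 0 -> dx h 0 0 = 0 -> dy h 0 0 = 0 ->
  filterlim (fun s => h (a s) (b s) / sqrt (a s ^ 2 + b s ^ 2)) F (locally 0).
Proof.
  intros HU HU0 Hh h00 hx0 hy0.
  apply filterlim_locally. intros eps. pose proof (cond_pos eps).
  destruct (Ck_lipschitz_near U k h 0 0 (eps / 4) HU Hh HU0 ltac:(lra)) as [d [Hd HL]].
  rewrite hx0, hy0, Rabs_R0 in HL.
  apply filterlim_locally with (eps := mkposreal d Hd) in La.
  apply filterlim_locally with (eps := mkposreal d Hd) in Lb.
  eapply filter_imp; [| exact (filter_and _ _ La Lb)].
  intros s [Has Hbs]. change (Rabs (a s - 0) < d) in Has. change (Rabs (b s - 0) < d) in Hbs.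
  change (Rabs (h (a s) (b s) / sqrt (a s ^ 2 + b s ^ 2) - 0) < eps).
  assert (H00 : Rabs (0 - 0) <= d) by (rewrite Rminus_0_r, Rabs_R0; lra).
  pose proof (HL (a s) (b s) 0 0 ltac:(lra) ltac:(lra) H00 H00) as Hlip.
  rewrite h00, !Rminus_0_r in *.
  set (r := sqrt (a s ^ 2 + b s ^ 2)) in *.
  assert (Hr : 0 < r) by apply sqrt_lt_R0, Hnz.
  assert (Hab : Rabs (a s) <= r /\ Rabs (b s) <= r).
  { assert (r ^ 2 = a s ^ 2 + b s ^ 2) by (apply pow2_sqrt, Rlt_le, Hnz).
    rewrite <- (pow2_abs (a s)), <- (pow2_abs (b s)) in *.
    pose proof (Rabs_pos (a s)). pose proof (Rabs_pos (b s)).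
    pose proof (pow2_ge_0 (Rabs (a s))). pose proof (pow2_ge_0 (Rabs (b s))). split; nra. }
  unfold Rdiv. rewrite Rabs_mult, Rabs_inv, (Rabs_right r) by lra.
  apply Rmult_lt_reg_r with r; [lra |].
  rewrite Rmult_assoc, Rinv_l, Rmult_1_r by lra. nra.
Qed.

End NearOrigin.

Section TangentLimits.
Variables (alpha beta : R) (f g : R -> R -> R) (a b : R -> R) (U : R * R -> Prop) (k : nat).
Hypothesis HU : open U.
Hypothesis HU0 : U (0, 0).
Hypothesis Hf : Ck (S k) f U.
Hypothesis Hg : Ck (S k) g U.
Hypothesis f0 : f 0 0 = 0 /\ dx f 0 0 = 0 /\ dy f 0 0 = 0.
Hypothesis g0 : g 0 0 = 0 /\ dx g 0 0 = 0 /\ dy g 0 0 = 0.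
Hypothesis Ha : forall s, is_derive a s (- alpha * a s + f (a s) (b s)).
Hypothesis Hb : forall s, is_derive b s (beta * b s + g (a s) (b s)).
Hypothesis Hnz : forall s, 0 < a s ^ 2 + b s ^ 2.
Hypothesis Hpos :
  forall s, 0 < (- alpha * a s + f (a s) (b s)) ^ 2 + (beta * b s + g (a s) (b s)) ^ 2.

Let r s := sqrt (a s ^ 2 + b s ^ 2).
Let P s := - alpha * (a s / r s) + f (a s) (b s) / r s.
Let Q s := beta * (b s / r s) + g (a s) (b s) / r s.

Lemma tangent_scaled s :
  tan_u a b s = P s / sqrt (P s ^ 2 + Q s ^ 2) /\ tan_v a b s = Q s / sqrt (P s ^ 2 + Q s ^ 2).
Proof.
  unfold tan_u, tan_v. rewrite (is_derive_unique _ _ _ (Ha s)), (is_derive_unique _ _ _ (Hb s)).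
  assert (Hr : 0 < r s) by apply sqrt_lt_R0, Hnz.
  assert (HP : P s = (- alpha * a s + f (a s) (b s)) / r s) by (unfold P; field; lra).
  assert (HQ : Q s = (beta * b s + g (a s) (b s)) / r s) by (unfold Q; field; lra).
  rewrite HP, HQ. split.
  - now apply div_norm_scale.
  - rewrite (Rplus_comm (_ ^ 2)), (Rplus_comm ((_ / r s) ^ 2)).
    apply div_norm_scale; [exact Hr | rewrite Rplus_comm; apply Hpos].
Qed.

Context {F : (R -> Prop) -> Prop} {FF : Filter F}.
Hypothesis La : filterlim a F (locally 0).
Hypothesis Lb : filterlim b F (locally 0).
Variables (pa pb : R).
Hypothesis Hpa : filterlim (fun s => a s / r s) F (locally pa).
Hypothesis Hpb : filterlim (fun s => b s / r s) F (locally pb).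
Hypothesis HD : 0 < (alpha * pa) ^ 2 + (beta * pb) ^ 2.

Let N := sqrt ((alpha * pa) ^ 2 + (beta * pb) ^ 2).

Lemma tangent_lim :
  filterlim (tan_u a b) F (locally (- alpha * pa / N)) /\
  filterlim (tan_v a b) F (locally (beta * pb / N)).
Proof.
  destruct f0 as [f00 [fx0 fy0]], g0 as [g00 [gx0 gy0]].
  assert (LP : filterlim P F (locally (- alpha * pa))).
  { rewrite <- (Rplus_0_r (- alpha * pa)). apply lim_plus; [now apply lim_scal |].
    now apply (Ck_flat_little_o a b Hnz La Lb U k). }
  assert (LQ : filterlim Q F (locally (beta * pb))).
  { rewrite <- (Rplus_0_r (beta * pb)). apply lim_plus; [now apply lim_scal |].
    now apply (Ck_flat_little_o a b Hnz La Lb U k). }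
  assert (LN : filterlim (fun s => sqrt (P s ^ 2 + Q s ^ 2)) F (locally N)).
  { unfold N. replace ((alpha * pa) ^ 2) with ((- alpha * pa) ^ 2) by ring.
    apply lim_sqrt, lim_plus; now apply lim_pow2. }
  assert (HN : N <> 0) by (apply Rgt_not_eq, sqrt_lt_R0, HD).
  split.
  - eapply filterlim_ext; [intro s; symmetry; apply tangent_scaled | now apply lim_div].
  - eapply filterlim_ext; [intro s; symmetry; apply tangent_scaled | now apply lim_div].
Qed.

Lemma Efun_lim : filterlim (Efun alpha beta f g a b) F
  (locally ((beta * pb / N) ^ 2 * (- alpha) + (- alpha * pa / N) ^ 2 * beta)).
Proof.
  destruct tangent_lim as [Lu Lv].
  destruct Hf as [_ [Hfx Hfy]], Hg as [_ [Hgx Hgy]].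
  destruct f0 as [_ [fx0 fy0]], g0 as [_ [gx0 gy0]].
  assert (Lpartial : forall h, Ck k h U ->
            filterlim (fun s => h (a s) (b s)) F (locally (h 0 0))).
  { intros h Hh. apply lim_continuous_2; [now apply (Ck_continuous U k) | exact La | exact Lb]. }
  replace ((beta * pb / N) ^ 2 * - alpha + (- alpha * pa / N) ^ 2 * beta) with
    ((beta * pb / N) ^ 2 * (- alpha + dx f 0 0) + (- alpha * pa / N) ^ 2 * (beta + dy g 0 0)
     - (- alpha * pa / N) * (beta * pb / N) * (dy f 0 0 + dx g 0 0))
    by (rewrite fx0, fy0, gx0, gy0; ring).
  unfold Efun; cbv zeta.
  apply lim_minus; [apply lim_plus |]; apply lim_mult;
    try (apply lim_pow2; assumption); try (apply lim_mult; assumption);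
    apply lim_plus; try apply filterlim_const; apply Lpartial; assumption.
Qed.

End TangentLimits.

Lemma exp_monotone (x y : R) : x <= y -> exp x <= exp y.
Proof. intros [Hlt | ->]; [now apply Rlt_le, exp_increasing | apply Rle_refl]. Qed.

Lemma exp_tail_small (A c e : R) : 0 <= A -> 0 < c -> 0 < e ->
  exists B0, forall B, B0 <= B -> A * exp (- c * B) < e.
Proof.
  intros HA Hc He. exists (A / (c * e)). intros B HB.
  assert (HcB : A / e <= c * B).
  { apply Rmult_le_compat_l with (r := c) in HB; [| lra].
    replace (c * (A / (c * e))) with (A / e) in HB by (field; lra). exact HB. }
  pose proof (exp_ineq1_le (c * B)). pose proof (exp_pos (c * B)).
  replace (exp (- c * B)) with (/ exp (c * B)) by (rewrite <- exp_Ropp; f_equal; ring).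
  apply Rmult_lt_reg_r with (exp (c * B)); [lra |].
  rewrite Rmult_assoc, Rinv_l, Rmult_1_r by lra.
  assert (A <= e * (c * B)).
  { apply Rmult_le_compat_l with (r := e) in HcB; [| lra].
    replace (e * (A / e)) with A in HcB by (field; lra). exact HcB. }
  nra.
Qed.

Section ExpTail.
Variables (H : R -> R) (K c T : R).
Hypothesis Hc : 0 < c.
Hypothesis HK : 0 <= K.
Hypothesis HT : 0 <= T.
Hypothesis Hcont : forall s, continuous H s.
Hypothesis Hnonneg : forall s, 0 <= H s.
Hypothesis Hdecay : forall s, T <= Rabs s -> H s <= K * exp (- c * Rabs s).

Lemma ex_RInt_continuous_R x y : ex_RInt H x y.
Proof. apply (ex_RInt_continuous (V := R_CompleteNormedModule)). intros; apply Hcont. Qed.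

Lemma RInt_tail_right x y : T <= x <= y -> 0 <= RInt H x y <= K / c * exp (- c * x).
Proof.
  intros Hxy. split; [apply RInt_ge_0; [lra | apply ex_RInt_continuous_R | intros; apply Hnonneg] |].
  assert (Hprim : is_RInt (fun s => K * exp (- c * s)) x y
                    (- (K / c) * exp (- c * y) - - (K / c) * exp (- c * x))).
  { apply (is_RInt_derive (fun s => - (K / c) * exp (- c * s))).
    - intros z _. auto_derive; [exact I | field; lra].
    - intros z _.
      apply (ex_derive_continuous (V := R_CompleteNormedModule)). auto_derive. exact I. }
  eapply Rle_trans.
  - apply RInt_le with (g := fun s => K * exp (- c * s));
      [lra | apply ex_RInt_continuous_R | eexists; exact Hprim |].
    intros z Hz. rewrite <- (Rabs_right z) at 2 by lra. apply Hdecay. rewrite Rabs_right; lra.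
  - rewrite (is_RInt_unique _ _ _ _ Hprim).
    assert (0 <= K / c * exp (- c * y))
      by (apply Rmult_le_pos; [apply Rdiv_le_0_compat; lra | apply Rlt_le, exp_pos]).
    lra.
Qed.

Lemma Rabs_RInt_tail_right B x y : T <= B -> B <= x -> B <= y ->
  Rabs (RInt H x y) <= K / c * exp (- c * B).
Proof.
  intros HB Hx Hy.
  assert (Hmono : forall z, B <= z -> K / c * exp (- c * z) <= K / c * exp (- c * B)).
  { intros z Hz. apply Rmult_le_compat_l; [apply Rdiv_le_0_compat; lra |].
    apply exp_monotone. nra. }
  destruct (Rle_dec x y).
  - destruct (RInt_tail_right x y) as [H0 H1]; [lra |].
    rewrite Rabs_right by lra. specialize (Hmono x Hx). lra.
  - rewrite <- (opp_RInt_swap H) by apply ex_RInt_continuous_R.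
    change (Rabs (- RInt H y x) <= K / c * exp (- c * B)). rewrite Rabs_Ropp.
    destruct (RInt_tail_right y x) as [H0 H1]; [lra |].
    rewrite Rabs_right by lra. specialize (Hmono y Hy). lra.
Qed.

End ExpTail.

Lemma Rabs_RInt_tail_left (H : R -> R) (K c T B x y : R) : 0 < c -> 0 <= K -> 0 <= T ->
  (forall s, continuous H s) -> (forall s, 0 <= H s) ->
  (forall s, T <= Rabs s -> H s <= K * exp (- c * Rabs s)) ->
  T <= B -> x <= - B -> y <= - B -> Rabs (RInt H x y) <= K / c * exp (- c * B).
Proof.
  intros Hc HK HT Hcont Hnonneg Hdecay HB Hx Hy.
  assert (Hcont_opp : forall s, continuous (fun t => H (- t)) s).
  { intro s. apply (continuous_comp (fun t => - t) H); [| apply Hcont].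
    apply (continuous_opp (V := R_NormedModule)), continuous_id. }
  assert (Hrefl : RInt H x y = - RInt (fun t => H (- t)) (- x) (- y)).
  { rewrite <- (RInt_opp (V := R_CompleteNormedModule)) by apply (ex_RInt_continuous_R _ Hcont_opp).
    symmetry. apply is_RInt_unique, (is_RInt_comp_opp (V := R_NormedModule)).
    rewrite !Ropp_involutive. apply (RInt_correct (V := R_CompleteNormedModule)).
    apply (ex_RInt_continuous_R H Hcont). }
  rewrite Hrefl, Rabs_Ropp. apply (Rabs_RInt_tail_right _ K c T); auto; [| lra | lra].
  intros s Hs. rewrite <- (Rabs_Ropp s). apply Hdecay. now rewrite Rabs_Ropp.
Qed.

Lemma ex_RInt_gen_of_cauchy (H : R -> R) : (forall x y, ex_RInt H x y) ->
  (forall eps : posreal, exists B, forall x y x' y', x < - B -> B < y -> x' < - B -> B < y' ->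
     Rabs (RInt H x' y' - RInt H x y) < eps) ->
  ex_RInt_gen H (Rbar_locally m_infty) (Rbar_locally p_infty).
Proof.
  intros Hex Hcauchy.
  set (I := fun xy : R * R => RInt H (fst xy) (snd xy)).
  assert (Hlim : exists l, filterlim I (filter_prod (Rbar_locally m_infty) (Rbar_locally p_infty))
                              (locally l)).
  { apply (filterlim_locally_cauchy
             (FF := @filter_prod_proper _ _ _ _ (Rbar_locally_filter _) (Rbar_locally_filter _))).
    intros eps. destruct (Hcauchy eps) as [B HB].
    exists (fun xy : R * R => fst xy < - B /\ B < snd xy). split.
    - apply Filter_prod with (fun x => x < - B) (fun y => B < y);
        [now exists (- B) | now exists B | now intros].
    - intros [x y] [x' y'] [Hx Hy] [Hx' Hy']. exact (HB x y x' y' Hx Hy Hx' Hy'). }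
  destruct Hlim as [l Hl]. exists l. intros P HP. specialize (Hl P HP).
  unfold filtermap in Hl. unfold filtermapi.
  eapply filter_imp; [| exact Hl]. intros [x y] HPxy. exists (I (x, y)). split; [| exact HPxy].
  apply (RInt_correct (V := R_CompleteNormedModule)), Hex.
Qed.

Lemma ex_RInt_gen_of_exp_tails (H : R -> R) (c : R) : 0 < c ->
  (forall s, continuous H s) -> (forall s, 0 <= H s) ->
  (exists K T, forall s, T <= Rabs s -> H s <= K * exp (- c * Rabs s)) ->
  ex_RInt_gen H (Rbar_locally m_infty) (Rbar_locally p_infty).
Proof.
  intros Hc Hcont Hnonneg [K [T0 Hdecay]].
  pose proof (Rmax_l T0 0). pose proof (Rmax_r T0 0). set (T := Rmax T0 0) in *.
  assert (HK : 0 <= Rabs K) by apply Rabs_pos.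
  assert (Hdecay' : forall s, T <= Rabs s -> H s <= Rabs K * exp (- c * Rabs s)).
  { intros s Hs. eapply Rle_trans; [apply Hdecay; lra |].
    apply Rmult_le_compat_r; [apply Rlt_le, exp_pos | apply Rle_abs]. }
  apply ex_RInt_gen_of_cauchy; [apply (ex_RInt_continuous_R H Hcont) |].
  intros eps. pose proof (cond_pos eps).
  destruct (exp_tail_small (Rabs K / c) c (eps / 2)) as [B0 HB0];
    [apply Rdiv_le_0_compat; lra | lra | lra |].
  pose proof (Rmax_l B0 T). pose proof (Rmax_r B0 T). set (B := Rmax B0 T) in *.
  specialize (HB0 B ltac:(lra)).
  exists B. intros x y x' y' Hx Hy Hx' Hy'.
  assert (Hsplit : RInt H x' y' - RInt H x y = RInt H x' x + RInt H y y').
  { rewrite <- (RInt_Chasles H x' x y'), <- (RInt_Chasles H x y y')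
      by apply (ex_RInt_continuous_R H Hcont).
    change (RInt H x' x + (RInt H x y + RInt H y y') - RInt H x y
            = RInt H x' x + RInt H y y'). ring. }
  pose proof (Rabs_RInt_tail_left H (Rabs K) c T B x' x Hc HK ltac:(lra) Hcont Hnonneg Hdecay'
                ltac:(lra) ltac:(lra) ltac:(lra)).
  pose proof (Rabs_RInt_tail_right H (Rabs K) c T Hc HK ltac:(lra) Hcont Hnonneg Hdecay' B y y'
                ltac:(lra) ltac:(lra) ltac:(lra)).
  rewrite Hsplit. eapply Rle_lt_trans; [apply Rabs_triang | lra].
Qed.

Lemma exp_neg_RInt_exp_decay (E : R -> R) (c : R) : 0 < c -> (forall s, continuous E s) ->
  (exists M, forall s, M < s -> c <= E s) -> (exists M, forall s, s < M -> E s <= - c) ->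
  exists C T, forall s, T <= Rabs s -> exp (- RInt E 0 s) <= C * exp (- c * Rabs s).
Proof.
  intros Hc HE [M1 HM1] [M2 HM2].
  assert (exE : forall x y, ex_RInt E x y)
    by (intros; apply (ex_RInt_continuous (V := R_CompleteNormedModule)); intros; apply HE).
  assert (RInt_c : forall x y, RInt (fun _ => c) x y = c * (y - x)).
  { intros x y. rewrite (RInt_const (V := R_CompleteNormedModule)).
    change (scal (y - x) c) with ((y - x) * c). simpl. ring. }
  set (T := Rabs M1 + Rabs M2 + 1).
  pose proof (Rle_abs M1). pose proof (Rle_abs (- M2)). rewrite Rabs_Ropp in *.
  pose proof (Rabs_pos M1). pose proof (Rabs_pos M2).
  assert (HT : M1 < T /\ - T < M2 /\ 0 < T) by (unfold T; lra). destruct HT as [HT1 [HT2 HT]].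
  set (C1 := exp (- RInt E 0 T + c * T)). set (C2 := exp (- RInt E 0 (- T) + c * T)).
  exists (Rmax C1 C2), T. intros s Hs.
  destruct (Rle_dec 0 s) as [Hs0 | Hs0].
  - rewrite Rabs_right in Hs |- * by lra.
    apply Rle_trans with (C1 * exp (- c * s));
      [| apply Rmult_le_compat_r; [apply Rlt_le, exp_pos | apply Rmax_l]].
    unfold C1. rewrite <- exp_plus. apply exp_monotone.
    rewrite <- (RInt_Chasles E 0 T s) by apply exE.
    assert (RInt (fun _ => c) T s <= RInt E T s).
    { apply RInt_le; [lra | apply (ex_RInt_const (V := R_CompleteNormedModule)) | apply exE |].
      intros; apply HM1; lra. }
    rewrite RInt_c in *. change (plus ?u ?v) with (u + v). lra.
  - rewrite Rabs_left in Hs |- * by lra.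
    apply Rle_trans with (C2 * exp (- c * - s));
      [| apply Rmult_le_compat_r; [apply Rlt_le, exp_pos | apply Rmax_r]].
    unfold C2. rewrite <- exp_plus. apply exp_monotone.
    rewrite <- (RInt_Chasles E 0 (- T) s) by apply exE.
    rewrite <- (opp_RInt_swap E s (- T)) by apply exE.
    assert (RInt E s (- T) <= RInt (fun _ => - c) s (- T)).
    { apply RInt_le; [lra | apply exE | apply (ex_RInt_const (V := R_CompleteNormedModule)) |].
      intros; apply HM2; lra. }
    rewrite (RInt_const (V := R_CompleteNormedModule)) in *.
    change (scal (- T - s) (- c)) with ((- T - s) * - c) in *.
    change (plus ?u (opp ?v)) with (u + - v). nra.
Qed.

Lemma abs_conv_integral_of_exp_decay (W Z : R -> R) (c : R) : 0 < c ->
  (forall s, continuous W s) ->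
  (exists C T, forall s, T <= Rabs s -> Rabs (W s) <= C * exp (- c * Rabs s)) ->
  (forall s, continuous Z s) ->
  (exists M T, forall s, T <= Rabs s -> Rabs (Z s) <= M) ->
  abs_conv_integral (fun s => W s * Z s).
Proof.
  intros Hc CW [C [T1 HW]] CZ [M [T2 HZ]].
  apply (ex_RInt_gen_of_exp_tails _ c Hc).
  - intro s. apply continuous_Rabs_comp, (continuous_mult (K := R_AbsRing)); auto.
  - intro s. apply Rabs_pos.
  - exists (C * M), (Rmax T1 T2). intros s Hs.
    pose proof (Rmax_l T1 T2). pose proof (Rmax_r T1 T2).
    specialize (HW s ltac:(lra)). specialize (HZ s ltac:(lra)).
    pose proof (Rabs_pos (W s)). pose proof (Rabs_pos (Z s)).
    rewrite Rabs_mult. replace (C * M * exp (- c * Rabs s)) with (C * exp (- c * Rabs s) * M) by ring.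
    apply Rmult_le_compat; assumption.
Qed.

Lemma bounded_at_infinity (Z : R -> R) (l1 l2 : R) :
  filterlim Z (Rbar_locally p_infty) (locally l1) ->
  filterlim Z (Rbar_locally m_infty) (locally l2) ->
  exists M T, forall s, T <= Rabs s -> Rabs (Z s) <= M.
Proof.
  intros L1 L2.
  apply filterlim_locally with (eps := mkposreal _ Rlt_0_1) in L1 as [N1 HN1].
  apply filterlim_locally with (eps := mkposreal _ Rlt_0_1) in L2 as [N2 HN2].
  exists (Rabs l1 + Rabs l2 + 1), (Rabs N1 + Rabs N2 + 1). intros s Hs.
  pose proof (Rle_abs N1). pose proof (Rle_abs (- N2)). rewrite Rabs_Ropp in *.
  pose proof (Rabs_pos N1). pose proof (Rabs_pos N2).
  pose proof (Rabs_pos l1). pose proof (Rabs_pos l2).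
  pose proof (Rabs_triang_inv (Z s) l1). pose proof (Rabs_triang_inv (Z s) l2).
  destruct (Rle_dec 0 s).
  - rewrite (Rabs_right s) in Hs by lra.
    assert (Rabs (Z s - l1) < 1) by (apply HN1; lra). lra.
  - rewrite (Rabs_left s) in Hs by lra.
    assert (Rabs (Z s - l2) < 1) by (apply HN2; lra). lra.
Qed.

Lemma sum_sq_pos_of_neq_0 (x y : R) : (x, y) <> (0, 0) -> 0 < x ^ 2 + y ^ 2.
Proof.
  intros Hxy. pose proof (pow2_ge_0 x). pose proof (pow2_ge_0 y).
  destruct (Req_dec x 0) as [-> | Hx]; [destruct (Req_dec y 0) as [-> | Hy] |].
  - now contradict Hxy.
  - pose proof (pow2_gt_0 y Hy). lra.
  - pose proof (pow2_gt_0 x Hx). lra.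
Qed.

Lemma flat_at_origin (f : R -> R -> R) : f 0 0 = 0 ->
  is_derive (fun t => f t 0) 0 0 -> is_derive (fun t => f 0 t) 0 0 ->
  f 0 0 = 0 /\ dx f 0 0 = 0 /\ dy f 0 0 = 0.
Proof. intros H0 Hx Hy. repeat split; [exact H0 | exact (is_derive_unique _ _ _ Hx) | exact (is_derive_unique _ _ _ Hy)]. Qed.

Section Homoclinic.
Variables (alpha beta : R) (f g : R -> R -> R) (a b : R -> R) (U : R * R -> Prop) (k : nat).
Hypothesis Halpha : 0 < alpha.
Hypothesis Hbeta : 0 < beta.
Hypothesis HU : open U.
Hypothesis HU0 : U (0, 0).
Hypothesis HUab : forall s, U (a s, b s).
Hypothesis Hf : Ck (S k) f U.
Hypothesis Hg : Ck (S k) g U.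
Hypothesis f0 : f 0 0 = 0 /\ dx f 0 0 = 0 /\ dy f 0 0 = 0.
Hypothesis g0 : g 0 0 = 0 /\ dx g 0 0 = 0 /\ dy g 0 0 = 0.
Hypothesis Ha : forall s, is_derive a s (- alpha * a s + f (a s) (b s)).
Hypothesis Hb : forall s, is_derive b s (beta * b s + g (a s) (b s)).
Hypothesis Hnz : forall s, 0 < a s ^ 2 + b s ^ 2.
Hypothesis Hpos :
  forall s, 0 < (- alpha * a s + f (a s) (b s)) ^ 2 + (beta * b s + g (a s) (b s)) ^ 2.
Hypothesis Lap : is_lim a p_infty 0.
Hypothesis Lbp : is_lim b p_infty 0.
Hypothesis Lam : is_lim a m_infty 0.
Hypothesis Lbm : is_lim b m_infty 0.
Hypothesis Hap : is_lim (fun s => a s / sqrt (a s ^ 2 + b s ^ 2)) p_infty 1.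
Hypothesis Hbm : is_lim (fun s => b s / sqrt (a s ^ 2 + b s ^ 2)) m_infty 1.

Lemma Efun_lim_p_infty : filterlim (Efun alpha beta f g a b) (Rbar_locally p_infty) (locally beta).
Proof.
  assert (Hbp := direction_lim_complement a b Hnz Hap).
  pose proof (Efun_lim alpha beta f g a b U k HU HU0 Hf Hg f0 g0 Ha Hb Hnz Hpos
                Lap Lbp 1 0 Hap Hbp ltac:(nra)) as L.
  replace ((alpha * 1) ^ 2 + (beta * 0) ^ 2) with (alpha ^ 2) in L by ring.
  rewrite sqrt_pow2 in L by lra.
  replace ((beta * 0 / alpha) ^ 2 * - alpha + (- alpha * 1 / alpha) ^ 2 * beta) with beta in L
    by (field; lra).
  exact L.
Qed.

Lemma Efun_lim_m_infty : filterlim (Efun alpha beta f g a b) (Rbar_locally m_infty) (locally (- alpha)).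
Proof.
  assert (Ham : filterlim (fun s => a s / sqrt (a s ^ 2 + b s ^ 2)) (Rbar_locally m_infty) (locally 0)).
  { apply filterlim_ext with (fun s => a s / sqrt (b s ^ 2 + a s ^ 2));
      [intro s; now rewrite Rplus_comm |].
    apply (direction_lim_complement b a); [intro s; rewrite Rplus_comm; apply Hnz |].
    apply filterlim_ext with (fun s => b s / sqrt (a s ^ 2 + b s ^ 2));
      [intro s; now rewrite Rplus_comm | exact Hbm]. }
  pose proof (Efun_lim alpha beta f g a b U k HU HU0 Hf Hg f0 g0 Ha Hb Hnz Hpos
                Lam Lbm 0 1 Ham Hbm ltac:(nra)) as L.
  replace ((alpha * 0) ^ 2 + (beta * 1) ^ 2) with (beta ^ 2) in L by ring.
  rewrite sqrt_pow2 in L by lra.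
  replace ((beta * 1 / beta) ^ 2 * - alpha + (- alpha * 0 / beta) ^ 2 * beta) with (- alpha) in L
    by (field; lra).
  exact L.
Qed.

Lemma weight_exp_decay : exists C T, forall s, T <= Rabs s ->
  Rabs (weight alpha beta f g a b s) <= C * exp (- (Rmin alpha beta / 2) * Rabs s).
Proof.
  set (c := Rmin alpha beta / 2).
  assert (Hc : 0 < c /\ c < alpha /\ c < beta).
  { unfold c. pose proof (Rmin_l alpha beta). pose proof (Rmin_r alpha beta).
    assert (0 < Rmin alpha beta) by now apply Rmin_pos. lra. }
  destruct Hc as [Hc [Hca Hcb]].
  assert (Hmargin : 0 < beta - c) by lra. assert (Hmargin' : 0 < alpha - c) by lra.
  pose proof Efun_lim_p_infty as Lp. pose proof Efun_lim_m_infty as Lm.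
  apply filterlim_locally with (eps := mkposreal _ Hmargin) in Lp as [M1 HM1].
  apply filterlim_locally with (eps := mkposreal _ Hmargin') in Lm as [M2 HM2].
  destruct (exp_neg_RInt_exp_decay (Efun alpha beta f g a b) c Hc
              (Efun_continuous alpha beta f g a b U k HU Hf Hg Ha Hb HUab Hpos)) as [C [T HCT]].
  { exists M1. intros s Hs. specialize (HM1 s Hs).
    change (Rabs (Efun alpha beta f g a b s - beta) < beta - c) in HM1.
    apply Rabs_def2 in HM1. lra. }
  { exists M2. intros s Hs. specialize (HM2 s Hs).
    change (Rabs (Efun alpha beta f g a b s - - alpha) < alpha - c) in HM2.
    apply Rabs_def2 in HM2. lra. }
  exists (2 * C), T. intros s Hs.
  eapply Rle_trans; [apply (Rabs_weight_le alpha beta f g a b Ha Hb Hpos) |].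
  specialize (HCT s Hs). lra.
Qed.

Lemma abs_conv_weight_mul (Z : R -> R) :
  (forall s, continuous Z s) -> (exists M T, forall s, T <= Rabs s -> Rabs (Z s) <= M) ->
  abs_conv_integral (fun s => weight alpha beta f g a b s * Z s).
Proof.
  assert (Hc : 0 < Rmin alpha beta / 2) by (assert (0 < Rmin alpha beta) by (now apply Rmin_pos); lra).
  apply (abs_conv_integral_of_exp_decay _ _ _ Hc); [| exact weight_exp_decay].
  exact (weight_continuous alpha beta f g a b U k HU Hf Hg Ha Hb HUab Hpos).
Qed.

End Homoclinic.

Theorem lemma3 (alpha beta : R) (f g h : R -> R -> R) (a b : R -> R)
  (U : R * R -> Prop) (omega : R) :
  0 < beta -> beta < alpha ->
  analytic_at0 f -> analytic_at0 g ->
  f 0 0 = 0 -> is_derive (fun t => f t 0) 0 0 -> is_derive (fun t => f 0 t) 0 0 ->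
  g 0 0 = 0 -> is_derive (fun t => g t 0) 0 0 -> is_derive (fun t => g 0 t) 0 0 ->
  open U -> U (0, 0) -> (forall s, U (a s, b s)) ->
  Ck 4 f U -> Ck 4 g U -> Ck 4 h U ->
  (forall s, is_derive a s (- alpha * a s + f (a s) (b s))) ->
  (forall s, is_derive b s (beta * b s + g (a s) (b s))) ->
  (forall s, (a s, b s) <> (0, 0)) ->
  is_lim a p_infty 0 -> is_lim b p_infty 0 ->
  is_lim a m_infty 0 -> is_lim b m_infty 0 ->
  is_lim (fun s => a s / sqrt (a s ^ 2 + b s ^ 2)) p_infty 1 ->
  is_lim (fun s => b s / sqrt (a s ^ 2 + b s ^ 2)) m_infty 1 ->
  abs_conv_integral (fun s => weight alpha beta f g a b s * h (a s) (b s)) /\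
  abs_conv_integral (fun s => weight alpha beta f g a b s * cos (omega * s)) /\
  abs_conv_integral (fun s => weight alpha beta f g a b s * sin (omega * s)).
Proof.
  intros Hbeta Hab _ _ f00 Hfx Hfy g00 Hgx Hgy HU HU0 HUab Hf Hg Hh Ha Hb Hne
    Lap Lbp Lam Lbm Hap Hbm.
  assert (Hnz : forall s, 0 < a s ^ 2 + b s ^ 2) by (intro s; apply sum_sq_pos_of_neq_0, Hne).
  pose proof (orbit_field_nonvanishing alpha beta f g a b U 3 HU Hf Hg Ha Hb HUab Hne Lap Lbp)
    as Hpos.
  pose proof (abs_conv_weight_mul alpha beta f g a b U 3 ltac:(lra) Hbeta HU HU0 HUab Hf Hg
                (flat_at_origin f f00 Hfx Hfy) (flat_at_origin g g00 Hgx Hgy)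
                Ha Hb Hnz Hpos Lap Lbp Lam Lbm Hap Hbm) as Hconv.
  assert (Hlin : forall s, continuous (fun t => omega * t) s)
    by (intro s; apply lim_scal, filterlim_id).
  split; [| split]; apply Hconv.
  - intro s. apply (orbit_comp_continuous alpha beta f g a b U HU Ha Hb HUab h 4), Hh.
  - apply (bounded_at_infinity _ (h 0 0) (h 0 0));
      apply lim_continuous_2; try apply (Ck_continuous U 4); assumption.
  - intro s. apply continuous_cos_comp, Hlin.
  - exists 1, 0. intros s _. apply Rabs_le_between. pose proof (COS_bound (omega * s)). lra.
  - intro s. apply continuous_sin_comp, Hlin.
  - exists 1, 0. intros s _. apply Rabs_le_between. pose proof (SIN_bound (omega * s)). lra.
Qed.
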